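(* If $U$ and $V$ are nonempty open subsets of $\Omega$, then there exists $N\in\mathbb Z^+$ such that $U\cap T^nV\neq\emptyset$ (equivalently $T^{-n}U\cap V\ne\emptyset$) for all $n\ge N$.
   Context: Let $I=[0,1)$ with its usual metric $d_I$, fix $\theta\in(0,1)$, and let $\Omega=I^{\mathbb Z}$ with metric $d(x,y)=\sup_{k\in\mathbb Z}\theta^{|k|}d_I(x_k,y_k)$. Let $\tau:I\to I$ have full branches, so that $b=\#\tau^{-1}(t)$ is constant. Assume there is $\eta\in(0,1)$ such that every inverse branch $\zeta$ of $\tau$ satisfies $d_I(\zeta(s),\zeta(t))\le\eta\,d_I(s,t)$. Let $(\bar\tau x)_i=\tau(x_i)$ and let $\sigma$ be the shift $(\sigma x)_i=x_{i+1}$. Let $E:\Omega\to\Omega$ be invertible and suppose there is $C_E\in(0,\eta^{-1})$ with $d(\sigma^nE^{-1}x,\sigma^nE^{-1}y)\le C_E\,d(\sigma^nx,\sigma^ny)$ for all $n\in\mathbb Z$ and $x,y\in\Omega$. The coupled map is $T=E\circ\bar\tau$. *)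

From Stdlib Require Import Reals Lra ZArith Classical ClassicalEpsilon.
Open Scope R_scope.

Definition inI (s : R) : Prop := 0 <= s < 1.

Definition seqZ := Z -> R.
Definition inOmega (x : seqZ) : Prop := forall k : Z, inI (x k).

Definition dterms (theta : R) (x y : seqZ) (r : R) : Prop :=
  exists k : Z, r = theta ^ (Z.abs_nat k) * Rabs (x k - y k).

(* d(x,y) = sup_k theta^|k| d_I(x_k,y_k)  (least upper bound, chosen
   classically; it exists for x, y in Omega). *)
Definition dOmega (theta : R) (x y : seqZ) : R :=
  epsilon (inhabits 0) (fun m => is_lub (dterms theta x y) m).

Definition shiftn (n : Z) (x : seqZ) : seqZ := fun i => x (i + n)%Z.

Definition taubar (tau : R -> R) (x : seqZ) : seqZ := fun i => tau (x i).

Definition openOmega (theta : R) (U : seqZ -> Prop) : Prop :=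
  (forall x, U x -> inOmega x) /\
  forall x, U x -> exists r, 0 < r /\
    forall y, inOmega y -> dOmega theta x y < r -> U y.

(* tau : I -> I has full branches: b inverse branches zeta_0..zeta_{b-1},
   each mapping I into I with tau o zeta_j = id on I, pairwise distinct
   values, and every preimage of t is one of the zeta_j t
   (so #tau^{-1}(t) = b for every t). *)
Definition full_branches (tau : R -> R) (b : nat) (zeta : nat -> R -> R) : Prop :=
  (forall s, inI s -> inI (tau s)) /\
  (forall j t, (j < b)%nat -> inI t -> inI (zeta j t) /\ tau (zeta j t) = t) /\
  (forall i j t, (i < b)%nat -> (j < b)%nat -> inI t -> zeta i t = zeta j t -> i = j) /\
  (forall s, inI s -> exists j, (j < b)%nat /\ zeta j (tau s) = s).

From Stdlib Require Import Reals ZArith Lra Lia FunctionalExtensionality ClassicalEpsilon.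
Open Scope R_scope.

(* The idea is that T is uniformly expanding: every point p has an inverse
   branch G p of T (apply E^-1, then coordinatewise the inverse branch of tau
   through p), which is a right inverse of T, sends T p back to p and
   contracts d by lam = eta * CE < 1.  Pulling a point u of U back along the
   forward orbit of a point v of V through these branches yields, for every n,
   a point w with T^n w = u and d(v, w) <= lam^n d(T^n v, u) <= lam^n, since
   Omega has diameter at most 1.  For n large, w lies in the ball around v
   contained in V. *)

Lemma pow_le_one (t : R) (n : nat) : 0 <= t <= 1 -> t ^ n <= 1.
Proof.
  intros Ht; induction n as [|n IH]; simpl; [lra|].
  assert (0 <= t ^ n) by (apply pow_le; lra). nra.
Qed.

Lemma inI_dist_lt1 (a c : R) : inI a -> inI c -> Rabs (a - c) < 1.
Proof. unfold inI, Rabs; intros; destruct Rcase_abs; lra. Qed.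

Lemma dterms_le1 theta x y : 0 < theta < 1 -> inOmega x -> inOmega y ->
  is_upper_bound (dterms theta x y) 1.
Proof.
  intros Ht Hx Hy r [k ->].
  assert (theta ^ Z.abs_nat k <= 1) by (apply pow_le_one; lra).
  assert (0 <= theta ^ Z.abs_nat k) by (apply pow_le; lra).
  pose proof (inI_dist_lt1 _ _ (Hx k) (Hy k)). pose proof (Rabs_pos (x k - y k)).
  nra.
Qed.

Lemma dOmega_lub theta x y : 0 < theta < 1 -> inOmega x -> inOmega y ->
  is_lub (dterms theta x y) (dOmega theta x y).
Proof.
  intros Ht Hx Hy. unfold dOmega. apply epsilon_spec.
  destruct (completeness (dterms theta x y)) as [m Hm].
  - exists 1. now apply dterms_le1.
  - exists (theta ^ Z.abs_nat 0 * Rabs (x 0%Z - y 0%Z)). now exists 0%Z.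
  - now exists m.
Qed.

Lemma dOmega_le1 theta x y : 0 < theta < 1 -> inOmega x -> inOmega y ->
  dOmega theta x y <= 1.
Proof.
  intros Ht Hx Hy. apply (proj2 (dOmega_lub theta x y Ht Hx Hy)).
  now apply dterms_le1.
Qed.

Lemma dOmega_coord_lip theta c a a' e e' : 0 < theta < 1 -> 0 <= c ->
  inOmega a -> inOmega a' -> inOmega e -> inOmega e' ->
  (forall k, Rabs (a k - a' k) <= c * Rabs (e k - e' k)) ->
  dOmega theta a a' <= c * dOmega theta e e'.
Proof.
  intros Ht Hc Ha Ha' He He' Hk.
  apply (proj2 (dOmega_lub theta a a' Ht Ha Ha')).
  intros r [k ->].
  assert (Hterm : theta ^ Z.abs_nat k * Rabs (e k - e' k) <= dOmega theta e e').
  { apply (proj1 (dOmega_lub theta e e' Ht He He')). now exists k. }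
  assert (0 <= theta ^ Z.abs_nat k) by (apply pow_le; lra).
  specialize (Hk k).
  apply Rle_trans with (theta ^ Z.abs_nat k * (c * Rabs (e k - e' k))).
  - now apply Rmult_le_compat_l.
  - nra.
Qed.

Lemma shiftn0 x : shiftn 0 x = x.
Proof. apply functional_extensionality; intro i; unfold shiftn; now rewrite Z.add_0_r. Qed.

Section PullBack.

Variables (X : Type) (P : X -> Prop) (d : X -> X -> R) (T : X -> X).
Variables (G : X -> X -> X) (lam : R).
Hypothesis lam_ge0 : 0 <= lam.
Hypothesis T_P : forall x, P x -> P (T x).
Hypothesis G_P : forall p x, P p -> P x -> P (G p x).
Hypothesis T_G : forall p x, P p -> P x -> T (G p x) = x.
Hypothesis G_T : forall p, P p -> G p (T p) = p.
Hypothesis G_contr : forall p x y, P p -> P x -> P y -> d (G p x) (G p y) <= lam * d x y.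

Lemma pull_back n v u : P v -> P u ->
  exists w, P w /\ Nat.iter n T w = u /\
    d v w <= lam ^ n * d (Nat.iter n T v) u.
Proof.
  revert v; induction n as [|n IH]; intros v Hv Hu.
  - exists u; split; [exact Hu|]; split; [reflexivity|].
    simpl; rewrite Rmult_1_l; apply Rle_refl.
  - destruct (IH (T v) (T_P v Hv) Hu) as [w [Hw [Hhit Hdist]]].
    exists (G v w); split; [now apply G_P|]; split.
    + now rewrite Nat.iter_succ_r, T_G.
    + rewrite Nat.iter_succ_r. pattern v at 1; rewrite <- (G_T v Hv).
      apply Rle_trans with (lam * d (T v) w); [apply G_contr; auto|].
      simpl; rewrite Rmult_assoc; apply Rmult_le_compat_l; lra.
Qed.

End PullBack.

Section CoupledMap.

Variables (theta eta CE : R) (tau : R -> R) (b : nat) (zeta : nat -> R -> R).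
Variables (E Einv : seqZ -> seqZ).
Hypothesis theta_bounds : 0 < theta < 1.
Hypothesis eta_ge0 : 0 <= eta.
Hypothesis tau_I : forall s, inI s -> inI (tau s).
Hypothesis zeta_branch : forall j t, (j < b)%nat -> inI t -> inI (zeta j t) /\ tau (zeta j t) = t.
Hypothesis zeta_onto : forall s, inI s -> exists j, (j < b)%nat /\ zeta j (tau s) = s.
Hypothesis zeta_contr : forall j s t, (j < b)%nat -> inI s -> inI t ->
  Rabs (zeta j s - zeta j t) <= eta * Rabs (s - t).
Hypothesis E_Omega : forall x, inOmega x -> inOmega (E x).
Hypothesis Einv_Omega : forall x, inOmega x -> inOmega (Einv x).
Hypothesis E_Einv : forall x, inOmega x -> E (Einv x) = x.
Hypothesis Einv_E : forall x, inOmega x -> Einv (E x) = x.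
Hypothesis Einv_lip : forall x y, inOmega x -> inOmega y ->
  dOmega theta (Einv x) (Einv y) <= CE * dOmega theta x y.
Hypothesis CE_ge0 : 0 <= CE.

Definition coupled (x : seqZ) : seqZ := E (taubar tau x).

Definition branch (p : seqZ) (k : Z) : nat :=
  epsilon (inhabits 0%nat) (fun j => (j < b)%nat /\ zeta j (tau (p k)) = p k).

Lemma branch_spec p k : inOmega p ->
  (branch p k < b)%nat /\ zeta (branch p k) (tau (p k)) = p k.
Proof. intro Hp. unfold branch. apply epsilon_spec, zeta_onto, Hp. Qed.

Definition inv_branch (p x : seqZ) : seqZ := fun k => zeta (branch p k) (Einv x k).

Lemma coupled_Omega x : inOmega x -> inOmega (coupled x).
Proof. intros Hx. apply E_Omega. intro k. apply tau_I, Hx. Qed.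

Lemma inv_branch_Omega p x : inOmega p -> inOmega x -> inOmega (inv_branch p x).
Proof.
  intros Hp Hx k. apply zeta_branch; [apply branch_spec, Hp | apply Einv_Omega, Hx].
Qed.

Lemma coupled_inv_branch p x : inOmega p -> inOmega x -> coupled (inv_branch p x) = x.
Proof.
  intros Hp Hx. unfold coupled.
  replace (taubar tau (inv_branch p x)) with (Einv x); [now apply E_Einv|].
  apply functional_extensionality; intro k. symmetry.
  apply zeta_branch; [apply branch_spec, Hp | apply Einv_Omega, Hx].
Qed.

Lemma inv_branch_coupled p : inOmega p -> inv_branch p (coupled p) = p.
Proof.
  intros Hp. unfold inv_branch, coupled.
  rewrite Einv_E by (intro k; apply tau_I, Hp).
  apply functional_extensionality; intro k. apply branch_spec, Hp.
Qed.

Lemma inv_branch_contr p x y : inOmega p -> inOmega x -> inOmega y ->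
  dOmega theta (inv_branch p x) (inv_branch p y) <= eta * CE * dOmega theta x y.
Proof.
  intros Hp Hx Hy.
  apply Rle_trans with (eta * dOmega theta (Einv x) (Einv y)).
  - apply dOmega_coord_lip; auto using inv_branch_Omega.
    intro k. apply zeta_contr; [apply branch_spec, Hp | apply Einv_Omega, Hx | apply Einv_Omega, Hy].
  - rewrite Rmult_assoc. apply Rmult_le_compat_l; auto.
Qed.

Lemma coupled_pull_back n v u : inOmega v -> inOmega u ->
  exists w, inOmega w /\ Nat.iter n coupled w = u /\
    dOmega theta v w <= (eta * CE) ^ n.
Proof.
  intros Hv Hu.
  destruct (pull_back seqZ inOmega (dOmega theta) coupled inv_branch (eta * CE)
              ltac:(nra) coupled_Omega inv_branch_Omega coupled_inv_branch
              inv_branch_coupled inv_branch_contr n v u Hv Hu)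
    as [w [Hw [Hhit Hdist]]].
  exists w; split; [exact Hw|]; split; [exact Hhit|].
  assert (Horbit : inOmega (Nat.iter n coupled v)).
  { clear Hhit Hdist. induction n; simpl; auto using coupled_Omega. }
  pose proof (dOmega_le1 theta _ _ theta_bounds Horbit Hu).
  assert (0 <= (eta * CE) ^ n) by (apply pow_le; nra).
  nra.
Qed.

End CoupledMap.

Theorem mainTheorem12
  (theta eta CE : R) (tau : R -> R) (b : nat) (zeta : nat -> R -> R)
  (E Einv : seqZ -> seqZ)
  (Htheta : 0 < theta < 1)
  (Heta : 0 < eta < 1)
  (Hfull : full_branches tau b zeta)
  (Hcontr : forall j s t, (j < b)%nat -> inI s -> inI t ->
              Rabs (zeta j s - zeta j t) <= eta * Rabs (s - t))
  (HEmap : forall x, inOmega x -> inOmega (E x))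
  (HEinvmap : forall x, inOmega x -> inOmega (Einv x))
  (HEinv1 : forall x, inOmega x -> E (Einv x) = x)
  (HEinv2 : forall x, inOmega x -> Einv (E x) = x)
  (HCE : 0 < CE < / eta)
  (HElip : forall (n : Z) (x y : seqZ), inOmega x -> inOmega y ->
     dOmega theta (shiftn n (Einv x)) (shiftn n (Einv y))
       <= CE * dOmega theta (shiftn n x) (shiftn n y))
  (U V : seqZ -> Prop)
  (HU : openOmega theta U) (HV : openOmega theta V)
  (HUne : exists x, U x) (HVne : exists x, V x) :
  let T := fun x => E (taubar tau x) in
  exists N : nat, (1 <= N)%nat /\
    forall n : nat, (N <= n)%nat ->
      exists x, U x /\ exists y, V y /\ Nat.iter n T y = x.
Proof.
  intros T.
  destruct Hfull as [Htau [Hzeta [_ Hsurj]]].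
  assert (HElip0 : forall x y, inOmega x -> inOmega y ->
            dOmega theta (Einv x) (Einv y) <= CE * dOmega theta x y).
  { intros x y Hx Hy. pose proof (HElip 0%Z x y Hx Hy) as H. now rewrite !shiftn0 in H. }
  assert (Hlam : 0 < eta * CE < 1).
  { split; [nra|].
    assert (H : eta * CE < eta * / eta) by (apply Rmult_lt_compat_l; lra).
    rewrite Rinv_r in H; lra. }
  destruct HUne as [u Hu], HVne as [v Hv].
  destruct HU as [HUom _], HV as [HVom HVop].
  destruct (HVop v Hv) as [r [Hr Hball]].
  destruct (pow_lt_1_zero (eta * CE) ltac:(rewrite Rabs_pos_eq; lra) r Hr) as [N HN].
  exists (Nat.max N 1); split; [apply Nat.le_max_r|].
  intros n Hn.
  destruct (coupled_pull_back theta eta CE tau b zeta E Einv Htheta ltac:(lra) Htau Hzeta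
              Hsurj Hcontr HEmap HEinvmap HEinv1 HEinv2 HElip0 ltac:(lra) n v u
              (HVom v Hv) (HUom u Hu)) as [w [Hw [Hhit Hdist]]].
  exists u; split; [exact Hu|]; exists w; split; [|exact Hhit].
  apply Hball; [exact Hw|].
  specialize (HN n ltac:(lia)). rewrite Rabs_pos_eq in HN by (apply pow_le; lra).
  lra.
Qed.
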